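(* Fix an integer $M\ge 6$ and a time $t>M$ of an insertion-only edge stream, so $|E^{(t)}|=t$. Let $\mathcal{S}_{\mathrm{mix}}$ be the sample of $M$ edges from $E^{(t)}$ obtained by reservoir sampling with capacity $M$ (as described in the context), and let $\mathcal{S}_{\mathrm{in}}$ be obtained by including each edge of $E^{(t)}$ independently with probability $M/t$. Let $f:2^{E^{(t)}}\to\{0,1\}$ be an arbitrary function. Then \[ \Pr\left(f(\mathcal{S}_{\mathrm{mix}})=1\right)\le e\sqrt{M}\,\Pr\left(f(\mathcal{S}_{\mathrm{in}})=1\right). \]
   Context: An insertion-only edge stream: at each time step $s=1,2,\dots$ an edge $e_s$ between two distinct vertices arrives, which is not already present; $E^{(t)}=\{e_1,\dots,e_t\}$. Reservoir sampling with capacity $M$: the sample starts empty; at time $s$, if $s\le M$ the edge $e_s$ is inserted; if $s>M$, with probability $M/s$ an edge chosen uniformly at random from the sample is removed and $e_s$ is inserted, otherwise the sample is unchanged. $\mathcal{S}_{\mathrm{mix}}$ is the sample at the end of time step $t$. *)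

From mathcomp Require Import all_boot all_order all_algebra.
From mathcomp Require Import reals sequences.
Set Implicit Arguments. Unset Strict Implicit. Unset Printing Implicit Defensive.
Import Order.TTheory GRing.Theory Num.Theory.
Local Open Scope ring_scope.

(* Edges of E^(t) are identified with their arrival indices: the edge e_s
   (arriving at time s, 1 <= s <= t) is the ordinal i : 'I_t with val i = s-1.
   A (random) sample is a subset of 'I_t; a distribution is a function
   {set 'I_t} -> R giving the probability of each possible sample. *)

Section Sampling.
Variables (R : realType) (t : nat).

Definition new_edge (s : nat) : {set 'I_t} := [set i : 'I_t | val i == s.-1].

(* transition kernel of reservoir sampling with capacity M at time s:
   probability of moving from sample S' (end of time s-1) to S (end of time s) *)
Definition res_step (M s : nat) (S' S : {set 'I_t}) : R :=
  if (s <= M)%N then (S == S' :|: new_edge s)%:R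
  else (1 - M%:R / s%:R) * (S == S')%:R
       + (M%:R / s%:R) *
         \sum_(x in S') (#|S'|%:R)^-1 * (S == (S' :\ x) :|: new_edge s)%:R.

Fixpoint reservoir (M s : nat) (S : {set 'I_t}) : R :=
  match s with
  | 0 => (S == set0)%:R
  | s'.+1 => \sum_(S' : {set 'I_t}) reservoir M s' S' * res_step M s S' S
  end.

Definition bernoulli_sample (p : R) (S : {set 'I_t}) : R :=
  p ^+ #|S| * (1 - p) ^+ (t - #|S|).

End Sampling.

(* Once the reservoir is full, its sample is uniform among the M-subsets of the
   edges arrived so far: a candidate S containing the new edge e has exactly
   s + 1 - M predecessors x |: (S :\ e), and (s + 1) C(s, M) = (s + 1 - M) C(s + 1, M)
   carries the induction.  Both sides of the theorem can then be compared sample by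
   sample; for |S| = M the ratio is 1 / (C(t, M) p^M (1 - p)^(t - M)) with p = M / t.
   With g n = n! e^n / n^n this product is g t / (g M g (t - M)), and g is
   nondecreasing with g n <= e sqrt n; the latter holds by induction because
   (1 + 1/n)^(2n + 1) >= e^2. *)

From mathcomp Require Import all_boot all_order all_algebra.
From mathcomp Require Import reals sequences exp topology normedtype.
From mathcomp Require Import ring lra.
Set Implicit Arguments. Unset Strict Implicit. Unset Printing Implicit Defensive.
Import Order.TTheory GRing.Theory Num.Theory.
Local Open Scope ring_scope.

Section StirlingRatio.
Variable R : realType.

Lemma exp_coeff_double_le (y : R) (i : nat) : 0 <= y ->
  exp_coeff (2 * y) i.+1 <= 2 * y ^+ i.+1.
Proof.
move=> y0; rewrite /exp_coeff /= exprMn ler_pdivrMr ?ltr0n ?fact_gt0 //.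
rewrite mulrAC ler_wpM2r ?exprn_ge0 // -natrX -natrM ler_nat factS expnS.
rewrite leq_mul //; elim: i => [//|i IH].
by rewrite expnS factS leq_mul.
Qed.

(* Termwise [exp_coeff (2 y) i <= 2 y^i] for [i >= 1], then sum the geometric series. *)
Lemma expR_double_le (y : R) : 0 <= y -> y < 1 -> (1 - y) * expR (2 * y) <= 1 + y.
Proof.
move=> y0 y1.
have partial k : (1 - y) * series (exp_coeff (2 * y)) k.+1 + 2 * y ^+ k.+1 <= 1 + y.
  elim: k => [|k IH].
    rewrite /series /= big_nat1 /exp_coeff /= expr0 expr1 divr1; lra.
  rewrite /series /= big_nat_recr //= mulrDr.
  have ck : (1 - y) * exp_coeff (2 * y) k.+1 <= (1 - y) * (2 * y ^+ k.+1).
    by rewrite ler_wpM2l ?exp_coeff_double_le // subr_ge0 ltW.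
  rewrite /series /= in IH; rewrite [y ^+ k.+2]exprS; lra.
have bound k : series (exp_coeff (2 * y)) k <= (1 - y)^-1 * (1 + y).
  rewrite ler_pdivlMl ?subr_gt0 //.
  case: k => [|k]; first by rewrite /series /= big_geq //= mulr0; lra.
  have := partial k; have : 0 <= 2 * y ^+ k.+1 by rewrite mulr_ge0 ?exprn_ge0.
  lra.
rewrite -ler_pdivlMl ?subr_gt0 //; apply: limr_le; first exact: is_cvg_series_exp_coeff.
by near=> k; apply: bound.
Unshelve. all: by end_near.
Qed.

Lemma expR2_mul_pow_le (n : nat) :
  expR 2 * (n%:R : R) ^+ (2 * n).+1 <= (n.+1%:R) ^+ (2 * n).+1.
Proof.
case: n => [|n]; first by rewrite expr1 mulr0 expr1 ler01.
set m := (2 * n.+1).+1.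
have m_gt0 : (0 : R) < m%:R by rewrite ltr0n.
have n_gt0 : (0 : R) < n.+1%:R by rewrite ltr0n.
set y : R := m%:R^-1.
have y_ge0 : 0 <= y by rewrite invr_ge0 ltW.
have y_lt1 : y < 1 by rewrite invf_lt1 // ltr1n.
have mE : (m%:R : R) = 2 * n.+1%:R + 1 by rewrite /m -addn1 natrD natrM.
have step : (n.+1%:R : R) * expR (2 * y) <= n.+2%:R.
  have := expR_double_le y_ge0 y_lt1.
  have -> : 1 - y = (2 / m%:R) * n.+1%:R by rewrite /y mE; field; lra.
  have -> : 1 + y = (2 / m%:R) * n.+2%:R by rewrite /y mE -addn1 natrD; field; lra.
  by rewrite -[_ * _ * expR _]mulrA ler_pM2l ?divr_gt0.
have := lerXn2r m (mulr_ge0 (ltW n_gt0) (expR_ge0 _)) (ler0n _ _) step.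
have -> : expR 2 = expR (2 * y) ^+ m :> R.
  by rewrite -expRM_natl mulrCA /y mulfV ?mulr1 // gt_eqF.
by rewrite mulrC -exprMn.
Qed.

(* Grows like [sqrt (2 pi n)] by Stirling's formula. *)
Definition stirling_ratio (n : nat) : R := n`!%:R * expR n%:R / n%:R ^+ n.

Lemma stirling_ratio_gt0 n : 0 < stirling_ratio n.
Proof.
rewrite divr_gt0 ?mulr_gt0 ?expR_gt0 ?ltr0n ?fact_gt0 //.
by case: n => [|n]; rewrite ?expr0 // exprn_gt0 // ltr0n.
Qed.

Lemma stirling_ratioS n :
  stirling_ratio n.+1 = stirling_ratio n * (expR 1 * n%:R ^+ n / n.+1%:R ^+ n).
Proof.
rewrite /stirling_ratio factS natrM -addn1 natrD expRD addn1 exprS.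
have Sn_neq0 : (n.+1%:R : R) != 0 by rewrite pnatr_eq0.
have nn_neq0 : (n%:R : R) ^+ n != 0.
  by case: n {Sn_neq0} => [|n]; rewrite ?expr0 ?oner_eq0 // expf_eq0 pnatr_eq0.
have Snn_neq0 : (n.+1%:R : R) ^+ n != 0 by rewrite expf_eq0 (negPf Sn_neq0) andbF.
by field; rewrite natr1 Sn_neq0 nn_neq0 Snn_neq0.
Qed.

Lemma stirling_ratio_nondecreasing : {homo stirling_ratio : m n / (m <= n)%N >-> m <= n}.
Proof.
apply/nondecreasing_seqP => n.
rewrite stirling_ratioS -[leLHS]mulr1 ler_pM2l ?stirling_ratio_gt0 //.
case: n => [|n]; first by rewrite !expr0 divr1 mulr1 ltW // expR_gt1.
have n_gt0 : (0 : R) < n.+1%:R by rewrite ltr0n.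
rewrite ler_pdivlMr ?exprn_gt0 ?ltr0n // mul1r.
have : (n.+2%:R : R) <= n.+1%:R * expR n.+1%:R^-1.
  have := expR_ge1Dx (n.+1%:R^-1 : R).
  by rewrite -(ler_pM2l n_gt0) mulrDr mulr1 mulfV ?gt_eqF // natr1.
move/(lerXn2r n.+1 (ler0n _ _) (mulr_ge0 (ltW n_gt0) (expR_ge0 _))).
by rewrite exprMn -expRM_natl mulfV ?gt_eqF // mulrC.
Qed.

Lemma stirling_ratio_sqr_le n : (0 < n)%N -> stirling_ratio n ^+ 2 <= expR 1 ^+ 2 * n%:R.
Proof.
elim: n => [//|[|n] IH _]; first by rewrite /stirling_ratio expr1 divr1 mul1r mulr1.
set n1 := n.+1 in IH *.
rewrite stirling_ratioS exprMn.
have q_ge0 : (0 : R) <= (expR 1 * n1%:R ^+ n1 / n1.+1%:R ^+ n1) ^+ 2.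
  by rewrite exprn_ge0 // divr_ge0 ?mulr_ge0 ?expR_ge0 ?exprn_ge0.
apply: le_trans (ler_wpM2r q_ge0 (IH isT)) _.
have key := expR2_mul_pow_le n1.
rewrite (_ : expR 2 = expR 1 ^+ 2) in key; last by rewrite -expRM_natl mulr1.
rewrite -[leLHS]mulrA ler_pM2l ?exprn_gt0 ?expR_gt0 //.
rewrite !exprMn exprVn -!exprM mulnC mulrA ler_pdivrMr ?exprn_gt0 ?ltr0n //.
by rewrite mulrCA -!exprS.
Qed.

Lemma stirling_ratio_le n : (0 < n)%N -> stirling_ratio n <= expR 1 * Num.sqrt n%:R.
Proof.
move=> n_gt0; rewrite -(ger0_norm (ltW (stirling_ratio_gt0 n))) -sqrtr_sqr.
rewrite -(ger0_norm (expR_ge0 (1 : R))) -sqrtr_sqr -sqrtrM ?sqr_ge0 //.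
by rewrite ler_sqrt ?stirling_ratio_sqr_le // mulr_ge0 ?sqr_ge0.
Qed.

Lemma binomial_mode_stirling (t M : nat) : (M <= t)%N -> (0 < t)%N ->
  'C(t, M)%:R * (M%:R / t%:R) ^+ M * (1 - M%:R / t%:R) ^+ (t - M)
  = stirling_ratio t / (stirling_ratio M * stirling_ratio (t - M)) :> R.
Proof.
move=> Mt t_gt0.
have t_neq0 : (t%:R : R) != 0 by rewrite pnatr_eq0 -lt0n.
have pow_neq0 k : (k%:R : R) ^+ k != 0.
  by case: k => [|k]; rewrite ?expr0 ?oner_eq0 // expf_eq0 pnatr_eq0.
have fact_neq0 k : (k`!%:R : R) != 0 by rewrite pnatr_eq0 -lt0n fact_gt0.
have -> : 1 - M%:R / t%:R = (t - M)%:R / t%:R :> R by rewrite natrB // mulrBl divff.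
rewrite /stirling_ratio -(bin_fact Mt) !natrM !expr_div_n.
have -> : expR t%:R = expR M%:R * expR (t - M)%:R :> R by rewrite -expRD -natrD subnKC.
have -> : (t%:R : R) ^+ t = t%:R ^+ M * t%:R ^+ (t - M) by rewrite -exprD subnKC.
field; rewrite !fact_neq0 !pow_neq0 !expf_neq0 // !gt_eqF ?expR_gt0 //.
Qed.

(* The right factor is the probability that Binomial(t, M / t) hits its mean M. *)
Lemma binomial_mode_ge (t M : nat) : (0 < M)%N -> (M <= t)%N ->
  1 <= expR 1 * Num.sqrt (M%:R : R) *
       ('C(t, M)%:R * (M%:R / t%:R) ^+ M * (1 - M%:R / t%:R) ^+ (t - M)).
Proof.
move=> M_gt0 Mt; rewrite binomial_mode_stirling ?(leq_trans M_gt0) //.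
have ratio_gt0 := stirling_ratio_gt0.
apply: le_trans (_ : stirling_ratio M * (stirling_ratio t /
  (stirling_ratio M * stirling_ratio (t - M))) <= _); last first.
  by rewrite ler_wpM2r ?stirling_ratio_le // ltW // divr_gt0 // mulr_gt0.
rewrite mulrCA invfM mulVKf ?gt_eqF // ler_pdivlMr // mul1r.
by apply: stirling_ratio_nondecreasing; rewrite leq_subr.
Qed.

End StirlingRatio.

Lemma sumr_eq_natrM (R : pzSemiRingType) (T : finType) (a : T) (F : T -> R) :
  \sum_(b : T) (b == a)%:R * F b = F a.
Proof. by rewrite (bigD1 a) //= eqxx mul1r big1 ?addr0 // => b /negPf ->; rewrite mul0r. Qed.

Lemma sumn_eq_andb (T : finType) (a : T) (c : bool) :
  (\sum_(b : T) ((b == a) && c : nat))%N = c.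
Proof. by rewrite (bigD1 a) //= eqxx andTb big1 ?addn0 // => b /negPf ->. Qed.

Lemma swap_setU1D1 (T : finType) (A B : {set T}) (x e : T) : x != e ->
  [&& x \in A, e \notin A & B == e |: (A :\ x)] ->
  [&& e \in B, x \notin B & A == x |: (B :\ e)].
Proof.
move=> xe /and3P [xA eA /eqP ->]; rewrite setU11 in_setU1 setD11 (negPf xe) /=.
by rewrite setU1K ?setD1K // in_setD1 (negPf eA) andbF.
Qed.

Lemma card_setU1D1 (T : finType) (A : {set T}) (x y : T) :
  y \in A -> x \notin A :\ y -> #|x |: (A :\ y)| = #|A|.
Proof. by move=> yA xA; rewrite cardsU1 xA (cardsD1 y A) yA. Qed.

Section Reservoir.
Variables (R : realType) (t : nat).

Definition arrived (s : nat) : {set 'I_t} := [set i : 'I_t | (i < s)%N].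

Lemma card_arrived s : (s <= t)%N -> #|arrived s| = s.
Proof.
elim: s => [_|s IH st]; first by apply/eqP; rewrite cards_eq0 -subset0; apply/subsetP.
have -> : arrived s.+1 = Ordinal st |: arrived s.
  by apply/setP => i; rewrite !inE -val_eqE /= ltnS leq_eqVlt.
by rewrite cardsU1 inE ltnn IH // ltnW.
Qed.

Lemma arrivedS s : arrived s.+1 = arrived s :|: new_edge t s.+1.
Proof. by apply/setP => i; rewrite !inE /= ltnS leq_eqVlt orbC. Qed.

Lemma reservoir_fill M s S : (s <= M)%N -> reservoir R M s S = (S == arrived s)%:R.
Proof.
elim: s S => [|s IH] S sM /=.
  by congr (_ == _)%:R; apply/setP => i; rewrite !inE.
under eq_bigr => S' _ do rewrite IH 1?ltnW //.
by rewrite sumr_eq_natrM /res_step sM arrivedS.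
Qed.

Definition prefix_subset (M s : nat) (S : {set 'I_t}) : bool :=
  (#|S| == M) && (S \subset arrived s).

Definition uniform_subset (M s : nat) (S : {set 'I_t}) : R :=
  (prefix_subset M s S)%:R / 'C(s, M)%:R.

Lemma reservoir_capacity M S : (M <= t)%N -> reservoir R M M S = uniform_subset M M S.
Proof.
move=> Mt; rewrite reservoir_fill // /uniform_subset binn mulr1n divr1 /prefix_subset.
rewrite eqEcard card_arrived //; case: (boolP (S \subset _)) => [sub|_]; rewrite ?andbF //=.
by rewrite andbT eqn_leq -[X in (#|S| <= X)%N](card_arrived Mt) subset_leq_card.
Qed.

Section Step.
Variables (M s : nat) (st : (s < t)%N).
Let e : 'I_t := Ordinal st.

Lemma new_edgeE : new_edge t s.+1 = [set e].
Proof. by apply/setP => i; rewrite !inE -val_eqE. Qed.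

Lemma new_edge_notin_arrived : e \notin arrived s.
Proof. by rewrite inE ltnn. Qed.

Lemma in_arrivedS (y : 'I_t) : (y \in arrived s.+1) = (y == e) || (y \in arrived s).
Proof. by rewrite arrivedS new_edgeE in_setU in_set1 orbC. Qed.

Lemma swap_predecessorE (x : 'I_t) (S' S : {set 'I_t}) :
  [&& x \in S', prefix_subset M s S' & S == e |: (S' :\ x)] =
  (S' == x |: (S :\ e)) &&
    [&& x \in arrived s :\: S, e \in S & prefix_subset M s.+1 S].
Proof.
have e_notin_sub (A : {set 'I_t}) : A \subset arrived s -> e \notin A.
  by move=> /subsetP sub; apply/negP => /sub; rewrite (negPf new_edge_notin_arrived).
apply/idP/idP.
  move=> /and3P [xS' /andP [/eqP cardS' subS'] /[dup] Sdef /eqP SE].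
  have eS' := e_notin_sub _ subS'.
  have xs := subsetP subS' x xS'.
  have xe : x != e by apply: contraNneq new_edge_notin_arrived => <-.
  have := @swap_setU1D1 _ S' S x e xe; rewrite xS' eS' Sdef.
  case/(_ isT)/and3P => eS xS ->; rewrite in_setD xS xs eS /prefix_subset /=.
  rewrite SE card_setU1D1 ?cardS' ?eqxx ?in_setD1 ?(negPf eS') ?andbF //=.
  rewrite subUset sub1set in_arrivedS eqxx /=.
  apply: subset_trans (subsetDl _ _) (subset_trans subS' _).
  by rewrite arrivedS subsetUl.
move=> /andP [/eqP S'E /and3P [/setDP [xs xS] eS /andP [/eqP cardS subS]]].
have xe : x != e by apply: contraNneq new_edge_notin_arrived => <-.
have := @swap_setU1D1 _ S S' e x; rewrite eq_sym xe eS xS S'E eqxx.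
case/(_ isT isT)/and3P => xS' _ ->; rewrite xS' /prefix_subset andbT /=.
rewrite card_setU1D1 ?cardS ?eqxx ?in_setD1 ?(negPf xS) ?andbF //=.
rewrite subUset sub1set xs; apply/subsetP => y /setD1P [ye yS].
by move: (subsetP subS y yS); rewrite in_arrivedS (negPf ye).
Qed.

(* The swaps leading to S are the pairs (x |: (S :\ e), x), with x one of the
   s + 1 - M arrived edges outside S. *)
Lemma count_swaps (S : {set 'I_t}) :
  (\sum_(S' | prefix_subset M s S') \sum_(x in S') (S == e |: (S' :\ x) : nat) =
   ((e \in S) && prefix_subset M s.+1 S) * (s.+1 - M))%N.
Proof.
have -> : (\sum_(S' | prefix_subset M s S') \sum_(x in S') (S == e |: (S' :\ x) : nat) =
    \sum_(S' : {set 'I_t}) \sum_(x : 'I_t)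
      ([&& x \in S', prefix_subset M s S' & S == e |: (S' :\ x)] : nat))%N.
  rewrite big_mkcond; apply: eq_bigr => S' _ /=; rewrite big_mkcond /=.
  case: (prefix_subset M s S'); last by rewrite big1 // => x _; rewrite andbF.
  by apply: eq_bigr => x _; case: (x \in S').
rewrite exchange_big /=.
under eq_bigr => x _ do under eq_bigr => S' _ do rewrite swap_predecessorE.
under eq_bigr => x _ do rewrite sumn_eq_andb.
case: (boolP ((e \in S) && prefix_subset M s.+1 S)) => [ePS|_]; last first.
  by rewrite big1 // => x _; rewrite andbF.
rewrite mul1n (eq_bigr (fun x => if x \in arrived s :\: S then 1 else 0)%N); last first.
  by move=> x _; rewrite andbT; case: (x \in _).
rewrite -big_mkcond sum1_card cardsD card_arrived 1?ltnW //.
move: ePS => /andP [eS /andP [/eqP cardS subS]].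
have -> : arrived s :&: S = S :\ e.
  apply/setP => y; rewrite in_setI in_setD1 andbC [RHS]andbC.
  case yS: (y \in S) => //=; move: (subsetP subS y yS); rewrite in_arrivedS.
  by case: eqVneq => [->|] //= _; rewrite (negPf new_edge_notin_arrived).
by move: (cardsD1 e S); rewrite eS cardS => ->; rewrite add1n subSS.
Qed.

Lemma prefix_subset_new_edge (S : {set 'I_t}) : e \in S -> prefix_subset M s S = false.
Proof.
move=> eS; apply/negbTE; rewrite negb_and; apply/orP; right.
by apply: contraNN new_edge_notin_arrived => /subsetP; apply.
Qed.

Lemma prefix_subsetS (S : {set 'I_t}) :
  e \notin S -> prefix_subset M s.+1 S = prefix_subset M s S.
Proof.
move=> eS; congr (_ && _); apply/subsetP/subsetP => sub y yS; last first.
  by rewrite in_arrivedS sub ?orbT.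
have ye : y != e by apply: contraNneq eS => <-.
by move: (sub y yS); rewrite in_arrivedS (negPf ye).
Qed.

Lemma uniform_mul_res_stepE (S' S : {set 'I_t}) : (0 < M)%N -> (M <= s)%N ->
  uniform_subset M s S' * res_step R M s.+1 S' S =
  (S' == S)%:R * ((1 - M%:R / s.+1%:R) * uniform_subset M s S') +
  (s.+1%:R * 'C(s, M)%:R)^-1 *
    (if prefix_subset M s S' then \sum_(x in S') (S == e |: (S' :\ x) : nat) else 0)%N%:R.
Proof.
move=> M_gt0 Ms; rewrite /res_step ltnNge Ms /= new_edgeE /uniform_subset.
have C_neq0 : ('C(s, M)%:R : R) != 0 by rewrite pnatr_eq0 -lt0n bin_gt0.
have M_neq0 : (M%:R : R) != 0 by rewrite pnatr_eq0 -lt0n.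
rewrite [(S == S')]eq_sym.
case: (boolP (prefix_subset M s S')) => [/[dup] PS' /andP [/eqP cardS' _]|_]; last first.
  by rewrite !mul0r !mulr0 addr0.
under eq_bigr => x _ do rewrite setUC.
rewrite cardS' natr_sum -mulr_sumr /= mulr1n.
by field; rewrite C_neq0 M_neq0 addrC natr1 pnatr_eq0.
Qed.

Lemma reservoir_step_uniform (S : {set 'I_t}) : (0 < M)%N -> (M <= s)%N ->
  \sum_(S' : {set 'I_t}) uniform_subset M s S' * res_step R M s.+1 S' S =
  uniform_subset M s.+1 S.
Proof.
move=> M_gt0 Ms.
under eq_bigr => S' _ do rewrite uniform_mul_res_stepE //.
rewrite big_split /= sumr_eq_natrM -mulr_sumr -natr_sum -big_mkcond count_swaps.
have sM_neq0 : ((s.+1 - M)%:R : R) != 0 by rewrite pnatr_eq0 subn_eq0 -ltnNge ltnS.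
have C_neq0 : ('C(s.+1, M)%:R : R) != 0 by rewrite pnatr_eq0 -lt0n bin_gt0 ltnW.
have binS : (s.+1 - M)%:R / (s.+1%:R * 'C(s, M)%:R) = ('C(s.+1, M)%:R : R)^-1.
  by rewrite -natrM mul_bin_down natrM invfM mulrA divff // mul1r.
have oneBa : 1 - M%:R / s.+1%:R = (s.+1 - M)%:R / s.+1%:R :> R.
  by rewrite natrB ?(leq_trans Ms) // mulrBl divff // pnatr_eq0.
rewrite /uniform_subset; case: (boolP (e \in S)) => eS.
  rewrite prefix_subset_new_edge // /= mul0r mulr0 add0r natrM.
  by rewrite mulrCA [_^-1 * _]mulrC binS.
by rewrite prefix_subsetS // /= mul0n mulr0 addr0 oneBa -binS invfM; ring.
Qed.
End Step.

Lemma reservoir_uniform M s S : (0 < M)%N -> (M <= s <= t)%N ->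
  reservoir R M s S = uniform_subset M s S.
Proof.
move=> M_gt0 /andP [Ms st]; elim: s Ms st S => [|s IH] Ms st S.
  by move: (leq_trans M_gt0 Ms).
rewrite leq_eqVlt ltnS in Ms; case/orP: Ms => [/eqP Me | Ms].
  by rewrite -Me reservoir_capacity // Me.
rewrite /=; under eq_bigr => S' _ do rewrite (IH Ms (ltnW st)).
exact: reservoir_step_uniform.
Qed.

Lemma reservoir_le_bernoulli M S : (0 < M)%N -> (M <= t)%N ->
  reservoir R M t S <=
  expR 1 * Num.sqrt (M%:R : R) * @bernoulli_sample R t (M%:R / t%:R) S.
Proof.
move=> M_gt0 Mt.
rewrite reservoir_uniform ?Mt ?leqnn // /uniform_subset /prefix_subset.
have -> : arrived t = setT by apply/setP => i; rewrite !inE ltn_ord.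
rewrite subsetT andbT /bernoulli_sample; set p : R := M%:R / t%:R.
have p_ge0 : 0 <= p by rewrite divr_ge0.
have p_le1 : p <= 1 by rewrite ler_pdivrMr ?ltr0n ?(leq_trans M_gt0) // mul1r ler_nat.
case: eqVneq => [->|_]; last first.
  by rewrite mul0r !mulr_ge0 ?expR_ge0 ?sqrtr_ge0 ?exprn_ge0 ?subr_ge0.
rewrite mulr1n ler_pdivrMr ?ltr0n ?bin_gt0 //.
have -> : expR 1 * Num.sqrt M%:R * (p ^+ M * (1 - p) ^+ (t - M)) * 'C(t, M)%:R =
    expR 1 * Num.sqrt M%:R * ('C(t, M)%:R * p ^+ M * (1 - p) ^+ (t - M)) by ring.
exact: binomial_mode_ge.
Qed.
End Reservoir.

Theorem lemma4p7 (R : realType) (M t : nat) (f : {set 'I_t} -> bool) :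
  (6 <= M)%N -> (M < t)%N ->
  \sum_(S : {set 'I_t} | f S) reservoir R M t S
    <= expR 1 * Num.sqrt (M%:R : R)
       * \sum_(S : {set 'I_t} | f S) @bernoulli_sample R t (M%:R / t%:R : R) S.
Proof.
move=> M_ge6 Mt; rewrite mulr_sumr; apply: ler_sum => S _.
by apply: reservoir_le_bernoulli; [apply: leq_trans M_ge6 | apply: ltnW].
Qed.
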